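(* Let $G\leq\mathrm{Sym}(n)$ be a Frobenius group with Frobenius complement $H$ and Frobenius kernel $K$, so $G=KH$. Then the derangement graph $\Gamma_G$ is the disjoint union of $|H|$ copies of the complete graph on $n$ vertices.
   Context: A transitive permutation group $G\leq\mathrm{Sym}(n)$ is a Frobenius group if no non-identity element fixes more than one point and some non-identity element fixes a point. A Frobenius complement is a non-trivial proper subgroup $H$ with $H\cap g^{-1}Hg=\{\mathrm{id}\}$ for all $g\in G\setminus H$. The Frobenius kernel is $K=\left(G\setminus\bigcup_{g\in G}g^{-1}Hg\right)\cup\{\mathrm{id}\}$. The derangement graph $\Gamma_G$ has vertex set $G$, with $\sigma,\pi$ adjacent iff $\sigma\pi^{-1}$ is a derangement (has no fixed point in $\{1,\dots,n\}$). *)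

From mathcomp Require Import all_boot all_fingroup.
Set Implicit Arguments. Unset Strict Implicit. Unset Printing Implicit Defensive.
Local Open Scope group_scope.

Definition derangement n (g : {perm 'I_n}) : bool := [forall i, g i != i].

Definition fixpts n (g : {perm 'I_n}) : {set 'I_n} := [set i | g i == i].

Definition frobenius_perm n (G : {group {perm 'I_n}}) : Prop :=
  [/\ [transitive G, on [set: 'I_n] | 'P],
      (forall g, g \in G -> g != 1 -> #|fixpts g| <= 1)
    & exists2 g, g \in G & (g != 1) && (fixpts g != set0)].

Definition frobenius_complement n (G H : {group {perm 'I_n}}) : Prop :=
  [/\ H \proper G, H :!=: 1
    & forall g, g \in G :\: H -> H :&: (H :^ g) = 1].

(* Frobenius kernel (given for reference; not needed in the statement). *)
Definition frobenius_kernel n (G H : {group {perm 'I_n}}) : {set {perm 'I_n}} :=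
  (G :\: \bigcup_(g in G) (H :^ g)) :|: [set 1].

Definition derangement_adj n (s t : {perm 'I_n}) : bool := derangement (s * t^-1).

(* A point stabilizer H0 of G is a Frobenius complement whose kernel consists
   of 1 and the derangements in G and has order #|G : H0| = n. By Frobenius'
   theorem H has a kernel too, and it is the same group because a Frobenius
   group has a unique kernel: a normal subgroup is comparable with the kernel,
   and a proper inclusion Ka < Kb of kernels would yield a Frobenius subgroup
   of a complement of Ka acting fixed-point-freely on an elementary abelian
   section of Ka of coprime order. Hence s and t are adjacent iff s != t and
   s t^-1 lies in K, so the components are the #|G : K| = #|H| cosets of K,
   each of size n. *)

From mathcomp Require Import all_boot all_fingroup all_algebra all_solvable.
From mathcomp Require Import mxrepresentation mxabelem vcharacter.
Set Implicit Arguments.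
Unset Strict Implicit.
Unset Printing Implicit Defensive.
Local Open Scope group_scope.
Import GRing.Theory.

Section ConjugateComplements.
Variables (gT : finGroupType) (P C : {group gT}).
Hypotheses (nPC : C \subset 'N(P)) (tiPC : P :&: C = 1).
Hypothesis regPC : semiregular P C.

Lemma conjg_compl_inj :
  {in setX P C^# &, injective (fun yc : gT * gT => yc.2 ^ yc.1)}.
Proof.
move=> [y1 c1] [y2 c2] /setXP[Py1 /setD1P[_ Cc1]].
move=> /setXP[Py2 /setD1P[ntc2 Cc2]] /= eqc.
have Pz : y2 * y1^-1 \in P by rewrite groupM ?groupV.
have def_c1 : c1 = c2 ^ (y2 * y1^-1) by rewrite conjgM -eqc conjgK.
have cz : [~ c2, y2 * y1^-1] = 1.
  apply/set1gP; rewrite -tiPC inE; apply/andP; split.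
    by rewrite commgEr groupM // memJ_norm ?groupV // (subsetP nPC).
  by rewrite commgEl -def_c1 groupM ?groupV.
have : y2 * y1^-1 \in 'C_P[c2].
  by rewrite inE Pz; apply/cent1P/esym/commgP/eqP.
rewrite regPC ?inE ?ntc2 // mulg_eq1 invgK => /eqP eqy.
by move: eqc; rewrite eqy => /conjg_inj ->.
Qed.

Lemma imset_conjg_compl :
  [set yc.2 ^ yc.1 | yc in setX P C^#] = (P <*> C) :\: P.
Proof.
have sPF := joing_subl P C; have sCF := joing_subr P C.
apply/eqP; rewrite eqEcard; apply/andP; split.
  apply/subsetP=> _ /imsetP[[y c] /setXP[Py /setD1P[ntc Cc]] ->] /=.
  rewrite inE (groupJ (subsetP sCF _ Cc) (subsetP sPF _ Py)) andbT.
  apply: contra ntc => Pcy; apply/eqP/set1gP; rewrite -tiPC inE Cc andbT.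
  by rewrite -(conjgK y c) groupJ ?groupV.
rewrite card_in_imset; last exact: conjg_compl_inj.
rewrite cardsX cardsD (setIidPr sPF) norm_joinEr // TI_cardMg //.
by rewrite (cardsD1 1 C) group1 add1n mulnS addKn.
Qed.

End ConjugateComplements.

Section FixedPointFreeAction.
Variables (gT : finGroupType) (r : nat) (V P C : {group gT}).
Hypotheses (abelV : r.-abelem V) (ntV : V :!=: 1) (nVF : P <*> C \subset 'N(V)).
Local Notation rG := (abelem_repr abelV ntV nVF).

Lemma mulmx_sum_repr_fpf (S : {group gT}) t (u : 'rV['F_r]_(abelem_dim' V).+1) :
  S \subset P <*> C -> t \in S -> 'C_V[t] = 1 ->
  (u *m \sum_(s in S) rG s = 0)%R.
Proof.
move=> sSF St cVt; set w := (u *m _)%R.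
have wt : (w *m rG t = w)%R.
  rewrite /w -mulmxA mulmx_suml; congr (_ *m _)%R.
  rewrite [RHS](reindex_inj (mulIg t)) /=.
  apply: eq_big => [s | s Ss]; first by rewrite groupMr.
  by rewrite repr_mxM ?(subsetP sSF).
have : rVabelem abelV ntV w \in 'C_V[t].
  rewrite inE mem_rVabelem /=; apply/cent1P/commgP/conjg_fixP.
  by rewrite -(rVabelemJ abelV ntV nVF) ?(subsetP sSF) // wt.
rewrite cVt => /set1gP w1.
by rewrite -(rVabelemK abelV ntV w) w1 morph1.
Qed.

(* For nonzero u in 'rV(V), u annihilates the sum of rG over F, over P and over
   each conjugate of C, while F is P together with the conjugates of C^#;
   comparing the sums gives |P| u = 0 in characteristic r. *)
Lemma semiregular_Frobenius_dvd :
  C \subset 'N(P) -> P :&: C = 1 -> P :!=: 1 -> C :!=: 1 ->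
  semiregular V (P <*> C) -> semiregular P C -> r %| #|P|.
Proof.
move=> nPC tiPC ntP ntC regVF regPC.
have sPF := joing_subl P C; have sCF := joing_subr P C.
have [x Vx ntx] := trivgPn _ ntV.
pose u := abelem_rV abelV ntV x.
have nz_u : u != 0%R.
  apply: contra ntx => /eqP u0; apply/eqP.
  apply: (@abelem_rV_inj _ _ _ abelV ntV _ _ Vx (group1 V)).
  by rewrite -/u u0 abelem_rV_1.
have [t Pt ntt] := trivgPn _ ntP.
have cVt : 'C_V[t] = 1 by apply: regVF; rewrite !inE ntt (subsetP sPF).
have [c Cc ntc] := trivgPn _ ntC.
have sum_conjC y : y \in P -> (u *m \sum_(s in C) rG (s ^ y)%g = 0)%R.
  move=> Py; have sCyF : C :^ y \subset P <*> C.
    by rewrite sub_conjg conjGid ?groupV ?(subsetP sPF).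
  have Ccy : c ^ y \in C :^ y by rewrite memJ_conjg.
  have cVcy : 'C_V[c ^ y] = 1.
    by apply: regVF; rewrite !inE conjg_eq1 ntc (subsetP sCyF).
  have := mulmx_sum_repr_fpf u sCyF Ccy cVcy.
  by rewrite big_imset //= => a b _ _; apply: conjg_inj.
have sum_conjC1 y : y \in P ->
    (u *m \sum_(s in C^#) rG (s ^ y)%g = - u)%R.
  move=> Py; have := sum_conjC y Py.
  rewrite (big_setD1 1 (group1 C)) /= conj1g repr_mx1 mulmxDr mulmx1.
  by move/eqP; rewrite addrC addr_eq0 => /eqP.
have decF : (\sum_(f in P <*> C) rG f =
    \sum_(f in P) rG f + \sum_(y in P) \sum_(s in C^#) rG (s ^ y)%g)%R.
  rewrite (big_setID P) (setIidPr sPF) /= -imset_conjg_compl // big_imset /=.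
    rewrite pair_big /=; congr (_ + _)%R.
    by apply: eq_bigl => -[y s]; rewrite inE.
  exact: conjg_compl_inj.
have : (u *m \sum_(f in P <*> C) rG f = - (u *+ #|P|))%R.
  rewrite decF mulmxDr (mulmx_sum_repr_fpf u sPF Pt cVt) add0r mulmx_sumr.
  by rewrite (eq_bigr _ sum_conjC1) sumr_const mulNrn.
rewrite (mulmx_sum_repr_fpf u (subxx _) (subsetP sPF t Pt) cVt).
move/esym/eqP; rewrite oppr_eq0 -scaler_nat scaler_eq0 (negbTE nz_u) orbF.
have [r_pr _ _] := pgroup_pdiv (abelem_pgroup abelV) ntV.
by rewrite -val_eqE /= val_Fp_nat.
Qed.

End FixedPointFreeAction.

Lemma Sylow_neq1 (gT : finGroupType) p (B P : {group gT}) :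
  p \in \pi(B) -> p.-Sylow(B) P -> P :!=: 1.
Proof. by move=> piBp sylP; rewrite -cardG_gt1 (card_Hall sylP) p_part_gt1. Qed.

Lemma coprime_normed_abelem_exists (gT : finGroupType) (K F : {group gT}) :
    K :!=: 1 -> solvable F -> F \subset 'N(K) -> coprime #|K| #|F| ->
  exists r (V : {group gT}),
    [/\ r.-abelem V, V :!=: 1, V \subset K & F \subset 'N(V)].
Proof.
move=> ntK solF nKF coKF; pose r := pdiv #|K|.
have [R sylR nRF] := sol_coprime_Sylow_exists r solF nKF coKF.
have ntR : R :!=: 1 by apply: Sylow_neq1 sylR; rewrite pi_pdiv cardG_gt1.
have rR : r.-group R := pHall_pgroup sylR.
exists r, ('Ohm_1('Z(R)))%G; split.
- exact: Ohm1_abelem (pgroupS (center_sub R) rR) (center_abelian R).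
- rewrite /= Ohm1_eq1; apply: contra ntR => /eqP ZR1.
  by apply/eqP; apply: trivg_center_pgroup rR ZR1.
- apply: subset_trans (Ohm_sub 1 _) _.
  exact: subset_trans (center_sub R) (pHall_sub sylR).
apply: char_norm_trans nRF; apply: char_trans (center_char R).
exact: Ohm_char.
Qed.

Lemma sdprod_meet_proper_neq1 (gT : finGroupType) (G K H N : {group gT}) :
  K ><| H = G -> K \proper N -> N \subset G -> H :&: N :!=: 1.
Proof.
move=> defG ltKN sNG; have [_ _ mulKH _ _] := sdprod_context defG.
have defN : K * (H :&: N) = N.
  by rewrite group_modl ?proper_sub // mulKH (setIidPr sNG).
apply: contraTneq ltKN => HN1.
by rewrite -defN HN1 mulg1 properxx.
Qed.

Lemma pgroup_join_cycle_sol (gT : finGroupType) (p : nat) (P : {group gT}) c :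
  p.-group P -> <[c]> \subset 'N(P) -> solvable (P <*> <[c]>).
Proof.
move=> pP nPc; have nsPF : P <| P <*> <[c]> by rewrite normalYl.
rewrite (series_sol nsPF) (pgroup_sol pP) /= (quotientYidl nPc).
by rewrite quotient_sol ?abelian_sol ?cycle_abelian.
Qed.

(* Otherwise a common element c of the two complements, together with a
   c-invariant Sylow subgroup P of Ha :&: Kb, would give a Frobenius group
   P <*> <[c]> inside Ha acting fixed-point-freely on a section of Ka, which
   semiregular_Frobenius_dvd rules out by coprimality. *)
Lemma Frobenius_compl_TI_proper_ker (gT : finGroupType)
    (G Ka Ha Kb Hb : {group gT}) :
    [Frobenius G = Ka ><| Ha] -> [Frobenius G = Kb ><| Hb] -> Ka \proper Kb ->
  Ha :&: Hb = 1.
Proof.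
move=> frA frB ltAB; apply/trivgP/subsetP=> c /setIP[Hac Hbc]; apply/set1gP/eqP.
apply: contraT => ntc.
have [defA _ _ _ _] := Frobenius_context frA.
have [defB _ _ _ _] := Frobenius_context frB.
have [nsKaG sHaG _ _ _] := sdprod_context defA.
have [nsKbG _ _ _ _] := sdprod_context defB.
have coKaHa := Frobenius_coprime frA; have coKbHb := Frobenius_coprime frB.
pose B := (Ha :&: Kb)%G; pose C := <[c]>%G.
have ntB : B :!=: 1 := sdprod_meet_proper_neq1 defA ltAB (normal_sub nsKbG).
have sCHa : C \subset Ha by rewrite cycle_subG.
have sCHb : C \subset Hb by rewrite cycle_subG.
have nBC : C \subset 'N(B).
  rewrite normsI ?(subset_trans sCHa) ?normG //.
  exact: subset_trans sHaG (normal_norm nsKbG).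
have coBC : coprime #|B| #|C|.
  exact: coprimeSg (subsetIr _ _) (coprimegS sCHb coKbHb).
pose p := pdiv #|B|.
have solC : solvable C := abelian_sol (cycle_abelian c).
have [P sylP nPC] := sol_coprime_Sylow_exists p solC nBC coBC.
have ntP : P :!=: 1 by apply: Sylow_neq1 sylP; rewrite pi_pdiv cardG_gt1.
have sPB : P \subset B := pHall_sub sylP.
pose F := (P <*> C)%G.
have sPHa : P \subset Ha := subset_trans sPB (subsetIl _ _).
have sFHa : F \subset Ha by rewrite join_subG sPHa sCHa.
have solF : solvable F := pgroup_join_cycle_sol (pHall_pgroup sylP) nPC.
have nKaF : F \subset 'N(Ka).
  exact: subset_trans sFHa (subset_trans sHaG (normal_norm nsKaG)).
have ntKa : Ka :!=: 1 by have [_ ntKa _ _ _] := Frobenius_context frA.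
have [r [V [abelV ntV sVKa nVF]]] :=
  coprime_normed_abelem_exists ntKa solF nKaF (coprimegS sFHa coKaHa).
have rP : r %| #|P|.
  apply: (semiregular_Frobenius_dvd abelV ntV nVF nPC) => //.
  - exact: coprime_TIg (coprimeSg sPB coBC).
  - by rewrite cycle_eq1.
  - exact: semiregularS sVKa sFHa (Frobenius_reg_ker frA).
  have sPKb : P \subset Kb := subset_trans sPB (subsetIr _ _).
  exact: semiregularS sPKb sCHb (Frobenius_reg_ker frB).
have [r_pr rV _] := pgroup_pdiv (abelem_pgroup abelV) ntV.
have coVP : coprime #|V| #|P|.
  exact: coprimeSg sVKa (coprimegS sPHa coKaHa).
by have := coprime_dvdl rV coVP; rewrite prime_coprime // rP.
Qed.

Lemma index_sdprodl (gT : finGroupType) (G K H : {group gT}) :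
  K ><| H = G -> #|G : H| = #|K|.
Proof.
move=> defG; have [_ sHG _ _ _] := sdprod_context defG.
by rewrite -divgS // -(sdprod_card defG) mulnK.
Qed.

(* The conjugates of H are permuted by Q and there are #|K| of them, a number
   prime to q, so Q normalizes, hence lies in, one of them. *)
Lemma Frobenius_compl_pgroup_subJ (gT : finGroupType)
    (G K H Q : {group gT}) (q : nat) :
    [Frobenius G = K ><| H] -> q.-group Q -> Q \subset G -> ~~ (q %| #|K|) ->
  exists2 g, g \in G & Q \subset H :^ g.
Proof.
move=> frG qQ sQG q'K.
have [defG _ _ _ _] := Frobenius_context frG.
have NH : 'N_G(H) = H.
  by have /andP[_ /and3P[_ _ /eqP]] := FrobeniusWcompl frG; rewrite normD1.
have actQ : [acts Q, on H :^: G | 'Js].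
  by rewrite -orbitJs; apply: subset_trans (acts_orbit _ _ (subsetT G)).
have := pgroup_fix_mod qQ actQ.
rewrite card_conjugates NH (index_sdprodl defG).
have [/eqP-> | /set0Pn[_ /setIP[/imsetP[g Gg ->] /afixP fixQ]]] :=
  boolP ('Fix_(H :^: G | 'Js)(Q) == set0).
  by rewrite cards0 mod0n => /eqP qK; case/negP: q'K.
move=> _; exists g => //; apply/subsetP=> x Qx.
have NHgx : x \in 'N_G(H :^ g).
  by rewrite inE (subsetP sQG) //; apply/normP/fixQ.
by move: NHgx; rewrite normJ -{1}(conjGid Gg) -conjIg NH.
Qed.

Lemma Frobenius_ker_not_proper (gT : finGroupType)
    (G Ka Ha Kb Hb : {group gT}) :
  [Frobenius G = Ka ><| Ha] -> [Frobenius G = Kb ><| Hb] -> ~~ (Ka \proper Kb).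
Proof.
move=> frA frB; apply/negP => ltAB.
have [defA _ _ _ _] := Frobenius_context frA.
have [defB _ ntHb _ _] := Frobenius_context frB.
have [nsKaG _ _ _ _] := sdprod_context defA.
have [_ sHbG _ _ _] := sdprod_context defB.
pose q := pdiv #|Hb|.
have q_pr : prime q by rewrite pdiv_prime // cardG_gt1.
have [c Hbc oc] := Cauchy q_pr (pdiv_dvd #|Hb|).
have qC : q.-group <[c]> by rewrite /pgroup -orderE oc pnat_id.
have q'Ka : ~~ (q %| #|Ka|).
  rewrite -prime_coprime // coprime_sym (coprime_dvdr (pdiv_dvd _)) //.
  exact: coprimeSg (proper_sub ltAB) (Frobenius_coprime frB).
have sCG : <[c]> \subset G by rewrite cycle_subG (subsetP sHbG).
have [g Gg] := Frobenius_compl_pgroup_subJ frA qC sCG q'Ka.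
rewrite cycle_subG => Hagc.
have frAg : [Frobenius G = Ka ><| (Ha :^ g)%G].
  by rewrite -{1}(conjGid Gg) -{1}(normsP (normal_norm nsKaG) g Gg) FrobeniusJ.
have := Frobenius_compl_TI_proper_ker frAg frB ltAB.
move/setP/(_ c); rewrite !inE Hagc Hbc => /esym/eqP c1.
by move: oc; rewrite c1 order1 => q1; rewrite -q1 in q_pr.
Qed.

Section FrobeniusKernel.
Variables (gT : finGroupType) (G K H : {group gT}).
Hypothesis frG : [Frobenius G = K ><| H].

Lemma Frobenius_commg_ker_inj y : y \in H^# -> {in K &, injective (commg^~ y)}.
Proof.
move=> H1y a b Ka Kb /=; rewrite !commgEl => eq_ab.
have def_by : b ^ y = b * (a^-1 * a ^ y) by rewrite eq_ab mulKVg.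
have : b * a^-1 \in 'C_K[y].
  rewrite inE groupM ?groupV //; apply/cent1P/commgP/conjg_fixP.
  by rewrite conjMg conjVg def_by mulgA mulgK.
rewrite (Frobenius_reg_ker frG H1y) => /set1gP/eqP.
by rewrite mulg_eq1 invgK => /eqP.
Qed.

(* An element x of N outside K lies in a conjugate of H^#, and the commutator
   map a |-> [~ a, x] then injects K into K :&: N. *)
Lemma Frobenius_normal_sub_ker (N : {group gT}) :
  N <| G -> ~~ (N \subset K) -> K \subset N.
Proof.
move=> /andP[sNG nNG] /subsetPn[x Nx Kx'].
have [defG _ _ _ _] := Frobenius_context frG.
have [/andP[sKG nKG] _ _ _ _] := sdprod_context defG.
have := subsetP sNG x Nx; rewrite -(cover_partition (Frobenius_partition frG)).
case/bigcupP=> _ /setU1P[-> | /imsetP[k Kk ->]]; first by rewrite (negbTE Kx').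
rewrite mem_conjg => H1y; set y := x ^ k^-1 in H1y.
have Ny : y \in N by rewrite memJ_norm ?groupV ?(subsetP nNG) ?(subsetP sKG).
have sKN : [set [~ a, y] | a in K] \subset K :&: N.
  apply/subsetP=> _ /imsetP[a Ka ->]; rewrite inE; apply/andP; split.
    rewrite commgEl groupM ?groupV // memJ_norm //.
    by rewrite (subsetP nKG) ?(subsetP sNG).
  rewrite commgEr groupM // memJ_norm ?groupV //.
  by rewrite (subsetP nNG) ?(subsetP sKG).
have /card_in_imset card_K := Frobenius_commg_ker_inj H1y.
apply/setIidPl/eqP; rewrite eqEcard subsetIl /=.
by rewrite -{1}card_K subset_leq_card.
Qed.

End FrobeniusKernel.

Lemma Frobenius_ker_uniq (gT : finGroupType) (G K1 H1 K2 H2 : {group gT}) :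
  [Frobenius G = K1 ><| H1] -> [Frobenius G = K2 ><| H2] -> K1 :=: K2.
Proof.
wlog suffices sK12 : K1 H1 K2 H2 / [Frobenius G = K1 ><| H1] ->
    [Frobenius G = K2 ><| H2] -> K1 \subset K2.
  move=> fr1 fr2; apply/eqP.
  by rewrite eqEsubset (sK12 _ H1 _ H2) ?(sK12 _ H2 _ H1).
move=> fr1 fr2; have [def2 _ _ _ _] := Frobenius_context fr2.
have [nsK2G _ _ _ _] := sdprod_context def2.
have [sK21 | /(Frobenius_normal_sub_ker fr1 nsK2G)//] := boolP (K2 \subset K1).
have := Frobenius_ker_not_proper fr2 fr1.
by rewrite properEneq sK21 andbT negbK => /eqP->.
Qed.

Lemma card_Frobenius_action_ker (gT : finGroupType) (G K H : {group gT})
    (sT : finType) (S : {set sT}) (to : {action gT &-> sT}) :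
  K ><| H = G -> Frobenius_action G H S to -> #|K| = #|S|.
Proof.
move=> defG [_ trG _ _ [u Su defH]].
by rewrite -(index_sdprodl defG) -(atransP trG u Su) card_orbit -defH.
Qed.

Section PermFrobenius.
Variables (n : nat) (G : {group {perm 'I_n}}).

Lemma Fix_perm_fixpts (g : {perm 'I_n}) :
  'Fix_([set: 'I_n] | 'P)[g] = fixpts g.
Proof. by apply/setP=> i; rewrite !inE sub1set inE. Qed.

Lemma derangementE (g : {perm 'I_n}) : derangement g = (fixpts g == set0).
Proof.
apply/forallP/eqP => [nfix | fix0 i].
  by apply/setP=> i; rewrite !inE (negbTE (nfix i)).
by apply: contraT; rewrite negbK => gi; rewrite -(in_set0 i) -fix0 inE.
Qed.

Lemma frobenius_perm_action :
  frobenius_perm G -> exists u, Frobenius_action G 'C_G[u | 'P] [set: 'I_n] 'P.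
Proof.
case=> trG fixG [g Gg /andP[ntg /set0Pn[u gu]]]; exists u; split=> //.
- apply/subsetP=> x /setIP[Gx /astabP cx]; apply/set1P/permP=> i.
  by rewrite perm1; exact: cx.
- by move=> x /setD1P[ntx Gx]; rewrite Fix_perm_fixpts fixG.
- apply/trivgPn; exists g => //; rewrite inE Gg; apply/astab1P.
  by move: gu; rewrite inE => /eqP.
- by exists u.
Qed.

Lemma frobenius_complementP (H : {group {perm 'I_n}}) :
  frobenius_complement G H -> [Frobenius G with complement H].
Proof.
case=> ltHG ntH tiH; apply/andP; split.
  by apply: contraTneq ltHG => ->; rewrite properxx.
apply/normedTI_P; split.
- by rewrite setD_eq0 subG1.
- by rewrite subsetI (proper_sub ltHG) normD1 normG.
move=> g Gg; apply: contraR => Hg'.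
by rewrite -setI_eq0 conjD1g -setDIl tiH ?setDv // inE Hg' Gg.
Qed.

Lemma derangement_Frobenius_ker (K H : {group {perm 'I_n}}) :
  K ><| H = G -> Frobenius_action G H [set: 'I_n] 'P ->
  {in G, forall x, derangement x = (x != 1) && (x \in K)}.
Proof.
move=> defG actG x Gx; rewrite (Frobenius_action_kernel_def defG actG) !inE Gx.
have [-> | ntx] := eqVneq x 1; last by rewrite Fix_perm_fixpts derangementE.
have [_ _ _ _ [u _ _]] := actG.
by apply/forallP => /(_ u); rewrite perm1 eqxx.
Qed.

End PermFrobenius.

Lemma pblock_rcosets (gT : finGroupType) (G K : {group gT}) x :
  K \subset G -> x \in G -> pblock (rcosets K G) x = K :* x.
Proof.
move=> sKG Gx; have /and3P[_ tiK _] := rcosets_partition sKG.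
have Kx : K :* x \in rcosets K G by rewrite mem_rcosets mulSGid.
exact: def_pblock tiK Kx (rcoset_refl K x).
Qed.

Theorem theorem11 (n : nat) (G H : {group {perm 'I_n}}) :
  frobenius_perm G -> frobenius_complement G H ->
  exists P : {set {set {perm 'I_n}}},
    [/\ partition P G, #|P| = #|H|,
        (forall B, B \in P -> #|B| = n)
      & forall s t, s \in G -> t \in G ->
          derangement_adj s t = (s != t) && (pblock P s == pblock P t)].
Proof.
move=> /frobenius_perm_action[u actG] /frobenius_complementP frH.
have [K frK] := Frobenius_kernel_exists frH.
have frGu : [Frobenius G with complement 'C_G[u | 'P]].
  exact/Frobenius_actionP/(hasFrobeniusAction actG).
have [K0 frK0] := Frobenius_kernel_exists frGu.
have eqK0 : K0 = K by apply/group_inj/(Frobenius_ker_uniq frK0 frK).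
have [defG0 _ _ _ _] := Frobenius_context frK0; rewrite eqK0 in defG0.
have [defG _ _ _ _] := Frobenius_context frK.
have sKG : K \subset G by have [/andP[]] := sdprod_context defG.
exists (rcosets K G); split.
- exact: rcosets_partition.
- exact/esym/index_sdprod.
- move=> _ /rcosetsP[x _ ->].
  by rewrite card_rcoset (card_Frobenius_action_ker defG0 actG) cardsT card_ord.
move=> s t Gs Gt; rewrite !pblock_rcosets // /derangement_adj.
have Gst : s * t^-1 \in G by rewrite groupM ?groupV.
rewrite (derangement_Frobenius_ker defG0 actG Gst).
rewrite -eq_mulgV1 -mem_rcoset; congr (_ && _).
by apply/idP/eqP => [/rcoset_eqP | <-]; rewrite ?rcoset_refl.
Qed.
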